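(* Let $a,a_1,a_2,b,b_1,b_2,x,x_1,x_2$ be non-negative reals such that $x_1+x_2\le x$, $a_1+a_2\le a$, $b_1+b_2\le b$ and $x\le\min\{a,b\}$. Then $$a_1b_2+a_1x_2+b_1a_2+b_1x_2+x_1a_2+x_1b_2\le ab+x\max\{a,b\}.$$ *)

From Stdlib Require Import Reals Lra.

(* Writing s_i = b_i + x_i, the left-hand side is a_1 s_2 + a_2 s_1 + x_2 b_1 + x_1 b_2.
   By symmetry we may assume a <= b and s_2 <= s_1.  Then a_1 s_2 + a_2 s_1 <= a s_1, and
   the remaining estimate a s_1 + x_2 b_1 + x_1 b_2 <= a b + x b is a sum of products of
   non-negative slacks. *)
From Stdlib Require Import Reals Lra.
Open Scope R_scope.

Definition cross_sum (a1 b1 x1 a2 b2 x2 : R) : R :=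
  a1 * b2 + a1 * x2 + b1 * a2 + b1 * x2 + x1 * a2 + x1 * b2.

Lemma cross_sum_swap_index (a1 b1 x1 a2 b2 x2 : R) :
  cross_sum a1 b1 x1 a2 b2 x2 = cross_sum a2 b2 x2 a1 b1 x1.
Proof. unfold cross_sum; ring. Qed.

Lemma cross_sum_swap_ab (a1 b1 x1 a2 b2 x2 : R) :
  cross_sum a1 b1 x1 a2 b2 x2 = cross_sum b1 a1 x1 b2 a2 x2.
Proof. unfold cross_sum; ring. Qed.

Lemma Rmult_cross_le (p q s t : R) :
  0 <= p -> 0 <= q -> t <= s -> p * t + q * s <= (p + q) * s.
Proof.
  intros hp hq hts.
  assert (p * t <= p * s) by (apply Rmult_le_compat_l; lra).
  lra.
Qed.

Lemma heavy_column_bound (a b b1 b2 x x1 x2 : R) :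
  0 <= b1 -> 0 <= b2 -> 0 <= x1 -> 0 <= x2 ->
  x1 + x2 <= x -> b1 + b2 <= b -> x <= a -> a <= b ->
  a * (b1 + x1) + x2 * b1 + x1 * b2 <= a * b + x * b.
Proof.
  intros hb1 hb2 hx1 hx2 Hx Hb Hxa Hab.
  (* The slack is (a-x1)(b-b1) + (x-x1)(b-b1) + x1(b-a) + b1(x-x1-x2) + x1(b-b1-b2). *)
  assert (0 <= (a - x1) * (b - b1)) by (apply Rmult_le_pos; lra).
  assert (0 <= (x - x1) * (b - b1)) by (apply Rmult_le_pos; lra).
  assert (0 <= x1 * (b - a)) by (apply Rmult_le_pos; lra).
  assert (0 <= b1 * (x - x1 - x2)) by (apply Rmult_le_pos; lra).
  assert (0 <= x1 * (b - b1 - b2)) by (apply Rmult_le_pos; lra).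
  lra.
Qed.

Lemma cross_sum_le_sorted (a a1 a2 b b1 b2 x x1 x2 : R) :
  0 <= a1 -> 0 <= a2 -> 0 <= b1 -> 0 <= b2 -> 0 <= x1 -> 0 <= x2 ->
  x1 + x2 <= x -> a1 + a2 <= a -> b1 + b2 <= b -> x <= a -> a <= b ->
  b2 + x2 <= b1 + x1 ->
  cross_sum a1 b1 x1 a2 b2 x2 <= a * b + x * b.
Proof.
  intros ha1 ha2 hb1 hb2 hx1 hx2 Hx Ha Hb Hxa Hab Hs.
  pose proof (Rmult_cross_le a1 a2 (b1 + x1) (b2 + x2) ha1 ha2 Hs).
  assert ((a1 + a2) * (b1 + x1) <= a * (b1 + x1)) by (apply Rmult_le_compat_r; lra).
  pose proof (heavy_column_bound a b b1 b2 x x1 x2 hb1 hb2 hx1 hx2 Hx Hb Hxa Hab).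
  unfold cross_sum; lra.
Qed.

Lemma cross_sum_le (a a1 a2 b b1 b2 x x1 x2 : R) :
  0 <= a1 -> 0 <= a2 -> 0 <= b1 -> 0 <= b2 -> 0 <= x1 -> 0 <= x2 ->
  x1 + x2 <= x -> a1 + a2 <= a -> b1 + b2 <= b -> x <= a -> a <= b ->
  cross_sum a1 b1 x1 a2 b2 x2 <= a * b + x * b.
Proof.
  intros ha1 ha2 hb1 hb2 hx1 hx2 Hx Ha Hb Hxa Hab.
  destruct (Rle_dec (b2 + x2) (b1 + x1)) as [Hs | Hs].
  - apply cross_sum_le_sorted; assumption.
  - rewrite cross_sum_swap_index.
    apply cross_sum_le_sorted; lra.
Qed.

Theorem lemma6p3 (a a1 a2 b b1 b2 x x1 x2 : R)
  (ha : 0 <= a) (ha1 : 0 <= a1) (ha2 : 0 <= a2)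
  (hb : 0 <= b) (hb1 : 0 <= b1) (hb2 : 0 <= b2)
  (hx : 0 <= x) (hx1 : 0 <= x1) (hx2 : 0 <= x2)
  (Hx : x1 + x2 <= x) (Ha : a1 + a2 <= a) (Hb : b1 + b2 <= b)
  (Hmin : x <= Rmin a b) :
  a1 * b2 + a1 * x2 + b1 * a2 + b1 * x2 + x1 * a2 + x1 * b2
    <= a * b + x * Rmax a b.
Proof.
  change (cross_sum a1 b1 x1 a2 b2 x2 <= a * b + x * Rmax a b).
  unfold Rmin, Rmax in *.
  destruct (Rle_dec a b) as [Hab | Hba].
  - apply cross_sum_le; assumption.
  - rewrite cross_sum_swap_ab, (Rmult_comm a b).
    apply cross_sum_le; lra.
Qed.
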